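(* Let $\mathfrak m$ be an infinite cardinal, let $(E,\mathcal L)$ be an $\mathfrak m$-exact local representation over an infinite set $B$, and let $B'\subseteq B$ be infinite. Let $E'=\{e\in E:\{\psi\in B^E:\psi_e\in B'\}\in\mathcal L\}$, equipped with the sub-local-representation structure over $B'$. Then $E'$ is an $\mathfrak m$-exact local representation over $B'$.
   Context: A local representation over a set $B$ is a pair $(E,\mathcal L)$ with $\mathcal L$ an ultrafilter on the cylinder Boolean algebra of $B^E$ (sets $\{\psi\in B^E:(\psi_{e_1},\dots,\psi_{e_n})\in R\}$, $e_i\in E$, $R\subseteq B^n$). Separated: $\{\psi:\psi_{e_1}=\psi_{e_2}\}\in\mathcal L$ only if $e_1=e_2$. The sub-local-representation structure on $E'$ over $B'$ is the ultrafilter $\mathcal L'$ on the cylinder algebra of $B'^{E'}$ with $\{\psi'\in B'^{E'}:(\psi'_{e_1},\dots,\psi'_{e_n})\in R\}\in\mathcal L'$ iff $\{\psi\in B^E:(\psi_{e_1},\dots,\psi_{e_n})\in R\}\in\mathcal L$, for $e_i\in E'$, $R\subseteq B'^n$. For $\eta:I\to E$, the pullback of $\mathcal L$ by $\eta$ is the ultrafilter on the cylinder algebra of $B^I$ of cylinders $C$ with $\{\psi:(\psi_{\eta(i)})_{i\in I}\in C\}\in\mathcal L$; for $i_0\notin I$, the projection to $B^I$ of an ultrafilter $\mathcal U$ on the cylinders of $B^{I\cup\{i_0\}}$ is the set of cylinders of $B^I$ whose preimage under restriction is in $\mathcal U$. For an infinite cardinal $\mathfrak m$, $(E,\mathcal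 L)$ is $\mathfrak m$-exact if it is separated and for every $I$ with $|I|<\mathfrak m$, $i_0\notin I$, $\eta:I\to E$, and ultrafilter $\mathcal U$ on the cylinder algebra of $B^{I\cup\{i_0\}}$ projecting to the pullback of $\mathcal L$ by $\eta$, there is $e\in E$ such that the pullback of $\mathcal L$ by $\eta\cup\{i_0\mapsto e\}$ equals $\mathcal U$. *)

From Stdlib Require Import List.
Import ListNotations.

Definition cylinder {X Y : Type} (C : (X -> Y) -> Prop) : Prop :=
  exists (xs : list X) (R : list Y -> Prop),
    forall psi, C psi <-> R (map psi xs).

Definition cyl_ultrafilter {X Y : Type} (L : ((X -> Y) -> Prop) -> Prop) : Prop :=
  (forall C, L C -> cylinder C) /\
  L (fun _ => True) /\
  ~ L (fun _ => False) /\
  (forall C D, L C -> L D -> L (fun psi => C psi /\ D psi)) /\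
  (forall C D, L C -> cylinder D -> (forall psi, C psi -> D psi) -> L D) /\
  (forall C, cylinder C -> L C \/ L (fun psi => ~ C psi)).

Definition separated {X Y : Type} (L : ((X -> Y) -> Prop) -> Prop) : Prop :=
  forall e1 e2 : X, L (fun psi => psi e1 = psi e2) -> e1 = e2.

Definition pullback {X Y I : Type} (L : ((X -> Y) -> Prop) -> Prop) (eta : I -> X)
  : ((I -> Y) -> Prop) -> Prop :=
  fun C => cylinder C /\ L (fun psi => C (fun i => psi (eta i))).

(* I ∪ {i0} with i0 ∉ I is modelled by option I (None = i0);
   projection of an ultrafilter on cylinders of Y^(option I) to Y^I. *)
Definition projection {Y I : Type} (U : ((option I -> Y) -> Prop) -> Prop)
  : ((I -> Y) -> Prop) -> Prop :=
  fun C => cylinder C /\ U (fun psi => C (fun i => psi (Some i))).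

Definition extend {X I : Type} (eta : I -> X) (x : X) : option I -> X :=
  fun o => match o with Some i => eta i | None => x end.

Definition injective {A B : Type} (f : A -> B) : Prop :=
  forall a1 a2, f a1 = f a2 -> a1 = a2.

Definition card_lt (I M : Type) : Prop :=
  (exists f : I -> M, injective f) /\ ~ (exists g : M -> I, injective g).

Definition infinite (A : Type) : Prop := exists f : nat -> A, injective f.

(* The infinite cardinal m is represented by an (infinite) type M with |M| = m.
   (X, L) is an m-exact local representation over Y. *)
Definition m_exact (M : Type) {X Y : Type} (L : ((X -> Y) -> Prop) -> Prop) : Prop :=
  cyl_ultrafilter L /\ separated L /\
  forall (I : Type), card_lt I M ->
  forall (eta : I -> X) (U : ((option I -> Y) -> Prop) -> Prop),
    cyl_ultrafilter U ->
    (forall C, projection U C <-> pullback L eta C) ->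
    exists x : X, forall C, pullback L (extend eta x) C <-> U C.

Definition subE {E B : Type} (L : ((E -> B) -> Prop) -> Prop) (B' : B -> Prop) : Type :=
  { e : E | L (fun psi => B' (psi e)) }.

(* Sub-local-representation structure on E' over B':
   a cylinder {psi' : (psi'_{e_1},...,psi'_{e_n}) in R} (e_i in E', R ⊆ B'^n)
   is in L' iff {psi : (psi_{e_1},...,psi_{e_n}) in R} is in L. *)
Definition subLR {E B : Type} (L : ((E -> B) -> Prop) -> Prop) (B' : B -> Prop)
  : ((subE L B' -> {b : B | B' b}) -> Prop) -> Prop :=
  fun C' => exists (es : list (subE L B')) (R : list {b : B | B' b} -> Prop),
    (forall psi', C' psi' <-> R (map psi' es)) /\
    L (fun psi => exists bs : list {b : B | B' b},
          map (@proj1_sig B B') bs = map (fun e => psi (proj1_sig e)) es /\ R bs).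

(* Fix a point of B' and retract B onto B' by sending everything outside B' to it.  Pushing L
   forward along the coordinatewise retraction gives exactly the sub-local-representation L' on
   E', because on the finitely many coordinates of a cylinder over E' the retraction is L-almost
   surely the identity.  An ultrafilter U on B'^(I ∪ {i0}) extending a pullback of L' is moved to
   B^(I ∪ {i0}) along the inclusion B' ⊆ B, where it extends the corresponding pullback of L;
   exactness of L yields a witness e, and e lies in E' because U lives on B'-valued functions. *)
From Stdlib Require Import List.
From Stdlib Require Import ClassicalEpsilon ProofIrrelevance FunctionalExtensionality PropExtensionality.
Import ListNotations.

Lemma pred_ext {A : Type} (P Q : A -> Prop) : (forall a, P a <-> Q a) -> P = Q.
Proof.
  intro H. apply functional_extensionality; intro a. apply propositional_extensionality, H.
Qed.

Definition pushforward {X Y X' Y' : Type} (V : ((X' -> Y') -> Prop) -> Prop)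
  (F : (X' -> Y') -> X -> Y) : ((X -> Y) -> Prop) -> Prop :=
  fun C => cylinder C /\ V (fun psi => C (F psi)).

Section Cylinders.
Context {X Y : Type}.

Lemma cylinder_true : @cylinder X Y (fun _ => True).
Proof. exists [], (fun _ => True). tauto. Qed.

Lemma cylinder_and (C D : (X -> Y) -> Prop) :
  cylinder C -> cylinder D -> cylinder (fun psi => C psi /\ D psi).
Proof.
  intros [xs [R HR]] [ys [S HS]].
  exists (xs ++ ys), (fun l => R (firstn (length xs) l) /\ S (skipn (length xs) l)).
  intro psi. rewrite map_app, <- (length_map psi xs), firstn_app, skipn_app,
    firstn_all, skipn_all, PeanoNat.Nat.sub_diag, firstn_O, skipn_O, app_nil_r, HR, HS.
  reflexivity.
Qed.

Lemma cylinder_not (C : (X -> Y) -> Prop) : cylinder C -> cylinder (fun psi => ~ C psi).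
Proof. intros [xs [R HR]]. exists xs, (fun l => ~ R l). intro psi. rewrite HR. reflexivity. Qed.

End Cylinders.

Lemma cylinder_comp {X Y X' Y' : Type} (h : X -> X') (k : Y' -> Y) (C : (X -> Y) -> Prop) :
  cylinder C -> cylinder (fun psi : X' -> Y' => C (fun x => k (psi (h x)))).
Proof.
  intros [xs [R HR]]. exists (map h xs), (fun ys => R (map k ys)). intro psi.
  rewrite HR, !map_map. reflexivity.
Qed.

Section Ultrafilters.
Context {X Y : Type} (L : ((X -> Y) -> Prop) -> Prop).
Hypothesis HL : cyl_ultrafilter L.

Lemma ultrafilter_mono (C D : (X -> Y) -> Prop) :
  L C -> cylinder D -> (forall psi, C psi -> D psi) -> L D.
Proof. destruct HL as (_ & _ & _ & _ & Hmono & _). eauto. Qed.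

Lemma ultrafilter_and (C D : (X -> Y) -> Prop) : L C -> L D -> L (fun psi => C psi /\ D psi).
Proof. destruct HL as (_ & _ & _ & Hand & _). eauto. Qed.

Lemma ultrafilter_iff_on (S C D : (X -> Y) -> Prop) :
  L S -> cylinder C -> cylinder D -> (forall psi, S psi -> (C psi <-> D psi)) -> (L C <-> L D).
Proof.
  intros HS HC HD HCD. split; intro H.
  - apply (ultrafilter_mono (fun psi => S psi /\ C psi)); [apply ultrafilter_and; auto | auto |].
    intros psi [? ?]. apply HCD; auto.
  - apply (ultrafilter_mono (fun psi => S psi /\ D psi)); [apply ultrafilter_and; auto | auto |].
    intros psi [? ?]. apply HCD; auto.
Qed.

Lemma ultrafilter_Forall (P : Y -> Prop) (xs : list X) :
  (forall x, In x xs -> L (fun psi => P (psi x))) -> L (fun psi => Forall P (map psi xs)).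
Proof.
  induction xs as [|x xs IH]; intro Hxs.
  - apply (ultrafilter_mono (fun _ => True)); [apply HL | | constructor].
    exists [], (Forall P). reflexivity.
  - apply (ultrafilter_mono (fun psi => P (psi x) /\ Forall P (map psi xs))).
    + apply ultrafilter_and; [apply Hxs; left; reflexivity |].
      apply IH. intros; apply Hxs; right; assumption.
    + exists (x :: xs), (Forall P). reflexivity.
    + intros psi [? ?]. constructor; assumption.
Qed.

End Ultrafilters.

Lemma pushforward_ultrafilter {X Y X' Y' : Type} (V : ((X' -> Y') -> Prop) -> Prop)
    (F : (X' -> Y') -> X -> Y) :
  cyl_ultrafilter V -> (forall C, cylinder C -> cylinder (fun psi => C (F psi))) ->
  cyl_ultrafilter (pushforward V F).
Proof.
  intros HV HF. pose proof HV as (_ & Htrue & Hfalse & Hand & Hmono & Hdich).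
  repeat split.
  - intros C [HC _]. exact HC.
  - apply cylinder_true.
  - exact Htrue.
  - intros [_ H]. exact (Hfalse H).
  - apply cylinder_and; [apply H | apply H0].
  - apply Hand; [apply H | apply H0].
  - assumption.
  - destruct H as [_ H]. eapply Hmono; eauto.
  - intros C HC. destruct (Hdich _ (HF _ HC)) as [H | H]; [left | right]; split; auto.
    apply cylinder_not, HC.
Qed.

Section Retraction.
Context {B : Type} (B' : B -> Prop) (d : {b : B | B' b}).

Definition retract (b : B) : {b : B | B' b} :=
  match excluded_middle_informative (B' b) with
  | left p => exist _ b p
  | right _ => d
  end.

Lemma val_retract (b : B) : B' b -> proj1_sig (retract b) = b.
Proof. intro p. unfold retract. destruct excluded_middle_informative; simpl; tauto. Qed.

Lemma val_inj : forall a b : {b : B | B' b}, proj1_sig a = proj1_sig b -> a = b.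
Proof. apply eq_sig_hprop. intros; apply proof_irrelevance. Qed.

Lemma retract_val (b : {b : B | B' b}) : retract (proj1_sig b) = b.
Proof. apply val_inj, val_retract, proj2_sig. Qed.

Lemma map_retract_val (bs : list {b : B | B' b}) : map retract (map (@proj1_sig _ _) bs) = bs.
Proof. rewrite map_map, (map_ext _ id retract_val). apply map_id. Qed.

Variables (X X' : Type) (L : ((X -> B) -> Prop) -> Prop) (h : X' -> X).
Hypothesis HL : cyl_ultrafilter L.
Hypothesis Hh : forall x', L (fun psi => B' (psi (h x'))).

Lemma ultrafilter_retract (C : (X' -> B) -> Prop) : cylinder C ->
  (L (fun psi => C (fun x' => proj1_sig (retract (psi (h x'))))) <->
   L (fun psi => C (fun x' => psi (h x')))).
Proof.
  intros HC. pose proof HC as [xs [R HR]].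
  apply (ultrafilter_iff_on L HL (fun psi => Forall B' (map psi (map h xs)))).
  - apply ultrafilter_Forall; [exact HL |].
    intros x Hx. apply in_map_iff in Hx as [x' [<- _]]. apply Hh.
  - exact (cylinder_comp h (fun b => proj1_sig (retract b)) C HC).
  - exact (cylinder_comp h (fun b => b) C HC).
  - intros psi Hval. rewrite !HR. rewrite !Forall_map in Hval.
    erewrite map_ext_Forall; [reflexivity |].
    eapply Forall_impl; [| exact Hval]. intros x' Hx'. apply val_retract, Hx'.
Qed.

End Retraction.

Section SubRepresentation.
Context {E B : Type} (B' : B -> Prop) (d : {b : B | B' b}).
Variable L : ((E -> B) -> Prop) -> Prop.
Hypothesis HL : cyl_ultrafilter L.

Notation E' := (subE L B').
Notation valE := (@proj1_sig E (fun e => L (fun psi => B' (psi e)))).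
Notation valB := (@proj1_sig B B').

Definition retract_coords (psi : E -> B) (e : E') : {b : B | B' b} := retract B' d (psi (valE e)).

Lemma cylinder_retract_coords (C : (E' -> {b : B | B' b}) -> Prop) :
  cylinder C -> cylinder (fun psi => C (retract_coords psi)).
Proof. exact (cylinder_comp valE (retract B' d) C). Qed.

Lemma ultrafilter_retract_coords {I : Type} (eta : I -> E') (C : (I -> B) -> Prop) :
  cylinder C ->
  (L (fun psi => C (fun i => valB (retract_coords psi (eta i)))) <->
   L (fun psi => C (fun i => psi (valE (eta i))))).
Proof.
  apply (ultrafilter_retract B' d E I L (fun i => valE (eta i)) HL).
  intro i. exact (proj2_sig (eta i)).
Qed.

Lemma subLR_pushforward : subLR L B' = pushforward L retract_coords.
Proof.
  apply pred_ext; intro C'.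
  assert (Hsub : forall es R, (forall psi', C' psi' <-> R (map psi' es)) ->
    (L (fun psi => exists bs, map valB bs = map (fun e => psi (valE e)) es /\ R bs) <->
     L (fun psi => C' (retract_coords psi)))).
  { intros es R HR.
    set (D := fun l : list B => exists bs, map valB bs = l /\ R bs).
    assert (HD : cylinder (fun psi' : E' -> B => D (map psi' es))) by (exists es, D; reflexivity).
    etransitivity; [symmetry; exact (ultrafilter_retract_coords (fun e => e) _ HD) |].
    replace (fun psi => C' (retract_coords psi))
      with (fun psi => D (map (fun e => valB (retract_coords psi e)) es)); [reflexivity |].
    apply pred_ext; intro psi. rewrite HR. split.
    (* on retracted values the witness bs of D is forced to be the retracted tuple *)
    - intros [bs [Hbs HRbs]]. apply (f_equal (map (retract B' d))) in Hbs.
      rewrite map_retract_val, map_map in Hbs.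
      rewrite (map_ext _ _ (fun e => retract_val B' d (retract_coords psi e))) in Hbs.
      rewrite Hbs in HRbs. exact HRbs.
    - intro HRbs. exists (map (retract_coords psi) es). rewrite map_map. auto. }
  split.
  - intros (es & R & HR & HLR). split; [exists es, R; exact HR |]. apply (Hsub es R HR), HLR.
  - intros [[es [R HR]] HLC]. exists es, R. split; [exact HR |]. apply (Hsub es R HR), HLC.
Qed.

Lemma pushforward_retract_separated :
  separated L -> separated (pushforward L retract_coords).
Proof.
  intros Hsep e1 e2 [_ Heq]. apply eq_sig_hprop; [intros; apply proof_irrelevance |].
  apply Hsep. set (C := fun psi' : E' -> B => psi' e1 = psi' e2).
  assert (HC : cylinder C).
  { exists [e1; e2], (fun l => match l with [a; b] => a = b | _ => False end). reflexivity. }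
  apply (ultrafilter_retract_coords (fun e => e) C HC).
  apply (ultrafilter_mono L HL _ _ Heq); [exact (cylinder_comp valE (fun b => valB (retract B' d b)) C HC) |].
  intros psi H. unfold C. rewrite H. reflexivity.
Qed.

Definition val_coords {I : Type} (phi : I -> {b : B | B' b}) : I -> B := fun i => valB (phi i).

Lemma pullback_pushforward_val {I : Type} (eta : I -> E') (C : (I -> B) -> Prop) : cylinder C ->
  (pullback (pushforward L retract_coords) eta (fun g => C (val_coords g)) <->
   pullback L (fun i => valE (eta i)) C).
Proof.
  intro HC. pose proof (ultrafilter_retract_coords eta C HC) as [Hval Hretract]. split.
  - intros [_ [_ H]]. split; [exact HC | exact (Hval H)].
  - intros [_ H]. split; [exact (cylinder_comp (fun i => i) valB C HC) |].
    split; [exact (cylinder_comp eta valB C HC) | exact (Hretract H)].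
Qed.

Lemma projection_pushforward_val {I : Type} (eta : I -> E')
    (U : ((option I -> {b : B | B' b}) -> Prop) -> Prop) :
  (forall C, projection U C <-> pullback (pushforward L retract_coords) eta C) ->
  forall C, projection (pushforward U val_coords) C <-> pullback L (fun i => valE (eta i)) C.
Proof.
  intros Hpr C. split.
  - intros [HC [_ HU]]. apply (pullback_pushforward_val eta C HC), Hpr.
    split; [exact (cylinder_comp (fun i => i) valB C HC) | exact HU].
  - intros H. pose proof (proj1 H) as HC.
    apply (pullback_pushforward_val eta C HC), Hpr in H as [_ HU].
    split; [exact HC |]. split; [exact (cylinder_comp Some (fun b => b) C HC) | exact HU].
Qed.

Lemma extension_in_subE {I : Type} (eta : I -> E')
    (U : ((option I -> {b : B | B' b}) -> Prop) -> Prop) (x0 : E) :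
  cyl_ultrafilter U ->
  (forall C, pullback L (extend (fun i => valE (eta i)) x0) C <-> pushforward U val_coords C) ->
  L (fun psi => B' (psi x0)).
Proof.
  intros HU Hx0. set (C0 := fun g : option I -> B => B' (g None)).
  assert (HC0 : cylinder C0).
  { exists [None], (fun l => match l with [b] => B' b | _ => False end). reflexivity. }
  apply (Hx0 C0). split; [exact HC0 |].
  apply (ultrafilter_mono U HU (fun _ => True)); [apply HU | exact (cylinder_comp (fun o => o) valB C0 HC0) |].
  intros phi _. exact (proj2_sig (phi None)).
Qed.

Lemma pullback_extend_subE {I : Type} (eta : I -> E')
    (U : ((option I -> {b : B | B' b}) -> Prop) -> Prop) (x : E') :
  cyl_ultrafilter U ->
  (forall C, pullback L (extend (fun i => valE (eta i)) (valE x)) C <-> pushforward U val_coords C) ->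
  forall C', pullback (pushforward L retract_coords) (extend eta x) C' <-> U C'.
Proof.
  intros HU Hx C'.
  enough (HC'_iff : cylinder C' -> (pullback (pushforward L retract_coords) (extend eta x) C' <-> U C')).
  { split; intro H; apply HC'_iff; auto; [apply H | apply HU, H]. }
  intro HC'. set (C := fun g : option I -> B => C' (fun o => retract B' d (g o))).
  assert (HC : cylinder C) by exact (cylinder_comp (fun o => o) (retract B' d) C' HC').
  assert (HC'C : C' = fun phi => C (val_coords phi)).
  { apply pred_ext; intro phi. unfold C, val_coords.
    replace (fun o => retract B' d (valB (phi o))) with phi; [reflexivity |].
    apply functional_extensionality; intro o. symmetry. apply retract_val. }
  assert (Hval_ext : (fun o => valE (extend eta x o)) = extend (fun i => valE (eta i)) (valE x)).
  { apply functional_extensionality; intros [i |]; reflexivity. }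
  rewrite HC'C, (pullback_pushforward_val (extend eta x) C HC), Hval_ext, Hx.
  split; [intros [_ H]; exact H | intro H; split; [exact HC | exact H]].
Qed.

Lemma m_exact_pushforward_retract (M : Type) :
  m_exact M L -> m_exact M (pushforward L retract_coords).
Proof.
  intros [_ [Hsep Hex]].
  split; [exact (pushforward_ultrafilter L retract_coords HL cylinder_retract_coords) |].
  split; [exact (pushforward_retract_separated Hsep) |].
  intros I HI eta U HU Hpr.
  assert (HUval : cyl_ultrafilter (pushforward U val_coords)).
  { apply pushforward_ultrafilter; [exact HU |]. exact (cylinder_comp (fun o => o) valB). }
  destruct (Hex I HI _ _ HUval (projection_pushforward_val eta U Hpr)) as [x0 Hx0].
  pose (x := exist _ x0 (extension_in_subE eta U x0 HU Hx0) : E').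
  exists x. exact (pullback_extend_subE eta U x HU Hx0).
Qed.

End SubRepresentation.

Theorem mainTheorem6 (M E B : Type) (L : ((E -> B) -> Prop) -> Prop) (B' : B -> Prop) :
  infinite M ->
  infinite B ->
  m_exact M L ->
  infinite {b : B | B' b} ->
  m_exact M (subLR L B').
Proof.
  intros _ _ HLex [f _].
  rewrite (subLR_pushforward B' (f 0) L (proj1 HLex)).
  exact (m_exact_pushforward_retract B' (f 0) L (proj1 HLex) M HLex).
Qed.
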